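(* For every base $\mathcal{B}$, atomic multisets $L,K$ and ILL formulae $\varphi,\psi,\chi$: if $\Vdash^L_{\mathcal{B}}\varphi\oplus\psi$, $\varphi\Vdash^K_{\mathcal{B}}\chi$ and $\psi\Vdash^K_{\mathcal{B}}\chi$, then $\Vdash^{L,K}_{\mathcal{B}}\chi$.
   Context: Fix a set $\mathbb{A}$ of propositional atoms. ILL formulae: $\phi ::= p\in\mathbb{A} \mid \top \mid 0 \mid 1 \mid \phi\multimap\phi \mid \phi\otimes\phi \mid \phi\,\&\,\phi \mid \phi\oplus\phi \mid\ !\phi$. All multisets are finite; ''$\Gamma,\Delta$'' denotes multiset union. Atomic rules and bases: an atomic sequent is $P\Rightarrow p$ with $P$ a multiset of atoms, $p$ an atom. An atomic box is a multiset of atomic sequents. An atomic rule is a triple $\langle\mathbf{A},\mathbf{S},p\rangle$ with $\mathbf{A}$ a multiset of atomic boxes, $\mathbf{S}$ an atomic box, $p$ an atom. A base is a set of atomic rules. An atom $p$ is persistent in $\mathcal{B}$ if some $\langle\varnothing,\mathbf{S},p\rangle\in\mathcal{B}$ has $\mathbf{S}\neq\varnothing$. Derivability $\vdash_{\mathcal{B}}$: (Ref) $p\vdash_{\mathcal{B}}p$; (App) if $\langle\mathbf{A},\mathbf{S},p\rangle\in\mathcal{B}$ with $\mathbf{A}=\{\mathbf{T}_1,\dots,\mathbf{T}_m\}$, and there are atomic multisets $C_1,\dots,C_n$ ($n\ge m$) and a multiset $D=\{d_{m+1},\dots,d_n\}$ of atoms persistent in $\mathcal{B}$ such that $C_i,Q\vdash_{\mathcal{B}}q$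 for every $i\le m$ and every $Q\Rightarrow q\in\mathbf{T}_i$, $C_j\vdash_{\mathcal{B}}d_j$ for every $m<j\le n$, and $D,U\vdash_{\mathcal{B}}v$ for every $U\Rightarrow v\in\mathbf{S}$, then $C_1,\dots,C_n\vdash_{\mathcal{B}}p$. Support $\Vdash^L_{\mathcal{B}}$ (base $\mathcal{B}$, atomic multiset $L$), by induction on formulae: $\Vdash^L_{\mathcal{B}}p$ iff $L\vdash_{\mathcal{B}}p$; $\Vdash^L_{\mathcal{B}}\varphi\multimap\psi$ iff $\varphi\Vdash^L_{\mathcal{B}}\psi$; $\Vdash^L_{\mathcal{B}}\varphi\otimes\psi$ iff for all $\mathcal{C}\supseteq\mathcal{B}$, atomic $K$, atoms $p$: if $\varphi,\psi\Vdash^K_{\mathcal{C}}p$ then $\Vdash^{L,K}_{\mathcal{C}}p$; $\Vdash^L_{\mathcal{B}}1$ iff for all $\mathcal{C}\supseteq\mathcal{B}$, $K$, $p$: if $\Vdash^K_{\mathcal{C}}p$ then $\Vdash^{L,K}_{\mathcal{C}}p$; $\Vdash^L_{\mathcal{B}}\varphi\&\psi$ iff $\Vdash^L_{\mathcal{B}}\varphi$ and $\Vdash^L_{\mathcal{B}}\psi$; $\Vdash^L_{\mathcal{B}}\varphi\oplus\psi$ iff for all $\mathcal{C}\supseteq\mathcal{B}$, $K$, $p$: if $\varphi\Vdash^K_{\mathcal{C}}p$ and $\psi\Vdash^K_{\mathcal{C}}p$ then $\Vdash^{L,K}_{\mathcal{C}}p$; $\Vdash^L_{\mathcal{B}}0$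 iff $\Vdash^{L,K}_{\mathcal{B}}p$ for all atoms $p$ and atomic $K$; $\Vdash^L_{\mathcal{B}}\top$ always; $\Vdash^L_{\mathcal{B}}!\varphi$ iff for all $\mathcal{C}\supseteq\mathcal{B}$, $K$, $p$: if (for all $\mathcal{D}\supseteq\mathcal{C}$, $\Vdash^{\varnothing}_{\mathcal{D}}\varphi$ implies $\Vdash^K_{\mathcal{D}}p$) then $\Vdash^{L,K}_{\mathcal{C}}p$. For nonempty multisets: $\Vdash^L_{\mathcal{B}}\Gamma,\Delta$ iff $L=K,M$ with $\Vdash^K_{\mathcal{B}}\Gamma$ and $\Vdash^M_{\mathcal{B}}\Delta$. For a nonempty antecedent written $!\Delta,\Theta$, where $!\Delta$ collects the formulae with top-level connective $!$ (with $\Delta$ the formulae under those $!$) and $\Theta$ contains none: $!\Delta,\Theta\Vdash^L_{\mathcal{B}}\varphi$ iff for all $\mathcal{C}\supseteq\mathcal{B}$ and atomic $K$, if $\Vdash^{\varnothing}_{\mathcal{C}}\delta$ for every $\delta\in\Delta$ and $\Vdash^K_{\mathcal{C}}\Theta$ then $\Vdash^{L,K}_{\mathcal{C}}\varphi$ (when $\Theta$ is empty, $K$ is empty). An empty antecedent: $\varnothing\Vdash^L_{\mathcal{B}}\varphi$ means $\Vdash^L_{\mathcal{B}}\varphi$. *)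

From Stdlib Require Import List Permutation.
Import ListNotations.
Set Implicit Arguments.

Section ILL.
Variable A : Type.

Inductive formula : Type :=
| Atom : A -> formula
| Top | Zero | One
| Lolli : formula -> formula -> formula
| Tensor : formula -> formula -> formula
| With : formula -> formula -> formula
| Plus : formula -> formula -> formula
| Bang : formula -> formula.

(* Multisets are lists taken up to permutation. *)
Definition sequent : Type := (list A * A)%type.
Definition box : Type := list sequent.
Record rule : Type := mkRule { prems : list box; sbox : box; concl : A }.
Definition base : Type := rule -> Prop.
Definition ext (B C : base) : Prop := forall r, B r -> C r.

Definition persistent (B : base) (p : A) : Prop :=
  exists S, B (mkRule [] S p) /\ S <> [].

Inductive deriv (B : base) : list A -> A -> Prop :=
| dRef : forall p, deriv B [p] p
| dApp : forall (r : rule) (Cs : list (list A)) (Ds : list (list A * A)) (L : list A),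
    B r ->
    length Cs = length (prems r) ->
    (forall i Q q, i < length Cs -> In (Q, q) (nth i (prems r) []) ->
       deriv B (nth i Cs [] ++ Q) q) ->
    (forall C d, In (C, d) Ds -> persistent B d /\ deriv B C d) ->
    (forall U v, In (U, v) (sbox r) -> deriv B (map snd Ds ++ U) v) ->
    Permutation L (concat Cs ++ concat (map fst Ds)) ->
    deriv B L (concl r).

(* An antecedent item: either !delta (we keep the support of delta at the
   empty multiset) or a non-! formula (we keep its support predicate). *)
Inductive item : Type :=
| IBang : (base -> Prop) -> item
| IPlain : (base -> list A -> Prop) -> item.

Fixpoint bangs_ok (its : list item) (C : base) : Prop :=
  match its with
  | [] => True
  | IBang P :: r => P C /\ bangs_ok r C
  | IPlain _ :: r => bangs_ok r C
  end.

Fixpoint plain_supp (its : list item) (C : base) (K : list A) : Prop :=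
  match its with
  | [] => K = []
  | IBang _ :: r => plain_supp r C K
  | IPlain P :: r => exists K1 K2, Permutation K (K1 ++ K2) /\ P C K1 /\ plain_supp r C K2
  end.

(* !Delta, Theta ||-^L_B phi, with goal C M := ||-^M_C phi *)
Definition ante (its : list item) (B : base) (L : list A)
  (goal : base -> list A -> Prop) : Prop :=
  forall C K, ext B C -> bangs_ok its C -> plain_supp its C K -> goal C (L ++ K).

Fixpoint supp (B : base) (L : list A) (f : formula) {struct f} : Prop :=
  match f with
  | Atom p => deriv B L p
  | Lolli g h =>
      ante [match g with Bang d => IBang (fun C => supp C [] d)
                       | _ => IPlain (fun C K => supp C K g) end]
           B L (fun C M => supp C M h)
  | Tensor g h =>
      forall C K p, ext B C ->
        ante [match g with Bang d => IBang (fun C => supp C [] d)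
                         | _ => IPlain (fun C K => supp C K g) end;
              match h with Bang d => IBang (fun C => supp C [] d)
                         | _ => IPlain (fun C K => supp C K h) end]
             C K (fun D M => deriv D M p) ->
        deriv C (L ++ K) p
  | One => forall C K p, ext B C -> deriv C K p -> deriv C (L ++ K) p
  | With g h => supp B L g /\ supp B L h
  | Plus g h =>
      forall C K p, ext B C ->
        ante [match g with Bang d => IBang (fun C => supp C [] d)
                         | _ => IPlain (fun C K => supp C K g) end]
             C K (fun D M => deriv D M p) ->
        ante [match h with Bang d => IBang (fun C => supp C [] d)
                         | _ => IPlain (fun C K => supp C K h) end]
             C K (fun D M => deriv D M p) ->
        deriv C (L ++ K) p
  | Zero => forall p K, deriv B (L ++ K) p
  | Top => True
  | Bang g =>
      forall C K p, ext B C ->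
        (forall D, ext C D -> supp D [] g -> deriv D K p) ->
        deriv C (L ++ K) p
  end.

Definition item_of (g : formula) : item :=
  match g with
  | Bang d => IBang (fun C => supp C [] d)
  | _ => IPlain (fun C K => supp C K g)
  end.

Definition ante_supp (B : base) (L : list A) (Gamma : list formula) (phi : formula) : Prop :=
  match Gamma with
  | [] => supp B L phi
  | _ => ante (map item_of Gamma) B L (fun C M => supp C M phi)
  end.

End ILL.

From Stdlib Require Import List Permutation.
Import ListNotations.

(* Apart from [-o], [&] and [Top], the support of every
   formula is given by a clause whose conclusion is atomic derivability
   [deriv C (M ++ K') p] in an extension [C] of the base; there the clause for
   [Plus phi psi] can be applied directly, once the two hypotheses on [chi] have
   been transported to [C] and framed by the extra context [K'].  The cases of
   [-o] and [&] reduce to the induction hypothesis. *)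

Section PlusElimination.
Context {A : Type}.
Implicit Types (B C D : base A) (L M K : list A) (f g h : formula A) (p : A).

Lemma ext_refl B : ext B B.
Proof. now intros r. Qed.

Lemma ext_trans {B C D} : ext B C -> ext C D -> ext B D.
Proof. intros EBC ECD r Hr. now apply ECD, EBC. Qed.

Lemma persistent_ext {B C p} : ext B C -> persistent B p -> persistent C p.
Proof. intros E [S [HS Hne]]. exists S. split; [apply E|]; assumption. Qed.

(* [deriv] nests recursive premises under [/\], so its generated induction
   principle is too weak; we recurse on the derivation directly. *)
Lemma deriv_ext {B C L p} : ext B C -> deriv B L p -> deriv C L p.
Proof.
  intros E. revert L p. fix IH 3. intros L p d.
  destruct d as [p|r Cs Ds L Hr Hlen Hprems HDs Hsbox HL].
  - apply dRef.
  - apply (dApp r Cs Ds); [exact (E r Hr) | exact Hlen | | | | exact HL].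
    + intros i Q q Hi HQ. exact (IH _ _ (Hprems i Q q Hi HQ)).
    + intros C' d Hd. destruct (HDs C' d Hd) as [Hpers Hder].
      split; [exact (persistent_ext E Hpers) | exact (IH _ _ Hder)].
    + intros U v HU. exact (IH _ _ (Hsbox U v HU)).
Qed.

Lemma deriv_perm {B L L' p} : Permutation L L' -> deriv B L p -> deriv B L' p.
Proof.
  intros HP d. destruct d as [p|r Cs Ds L Hr Hlen Hprems HDs Hsbox HL].
  - apply Permutation_length_1_inv in HP. subst. apply dRef.
  - eapply dApp; eauto. exact (Permutation_trans (Permutation_sym HP) HL).
Qed.

Lemma ante_ext {its B C K} {G : base A -> list A -> Prop} :
  ext B C -> ante its B K G -> ante its C K G.
Proof. intros E H D K' ECD. apply H. exact (ext_trans E ECD). Qed.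

Lemma ante_impl {its B K} {G G' : base A -> list A -> Prop} :
  (forall D M, ext B D -> G D M -> G' D M) -> ante its B K G -> ante its B K G'.
Proof. intros HGG' H D K' E Hb Hp. exact (HGG' _ _ E (H D K' E Hb Hp)). Qed.

Lemma supp_ext {f} : forall {B C L}, ext B C -> supp B L f -> supp C L f.
Proof.
  induction f; intros B C L E H; simpl in *.
  - exact (deriv_ext E H).
  - exact I.
  - intros p K. exact (deriv_ext E (H p K)).
  - intros C' K p E'. apply H. exact (ext_trans E E').
  - exact (ante_ext E H).
  - intros C' K p E'. apply H. exact (ext_trans E E').
  - destruct H. split; eauto.
  - intros C' K p E'. apply H. exact (ext_trans E E').
  - intros C' K p E'. apply H. exact (ext_trans E E').
Qed.

Lemma supp_perm {f} : forall {B L L'}, Permutation L L' -> supp B L f -> supp B L' f.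
Proof.
  induction f; intros B L L' HP H; simpl in *.
  - exact (deriv_perm HP H).
  - exact I.
  - intros p K. exact (deriv_perm (Permutation_app_tail K HP) (H p K)).
  - intros C K p E d. exact (deriv_perm (Permutation_app_tail K HP) (H C K p E d)).
  - intros C K E Hb Hp. exact (IHf2 _ _ _ (Permutation_app_tail K HP) (H C K E Hb Hp)).
  - intros C K p E Hgh. exact (deriv_perm (Permutation_app_tail K HP) (H C K p E Hgh)).
  - destruct H. split; eauto.
  - intros C K p E Hg Hh. exact (deriv_perm (Permutation_app_tail K HP) (H C K p E Hg Hh)).
  - intros C K p E Hg. exact (deriv_perm (Permutation_app_tail K HP) (H C K p E Hg)).
Qed.

Definition item_ext_closed (it : item A) : Prop :=
  match it with
  | IBang P => forall C D, ext C D -> P C -> P D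
  | IPlain P => forall C D K, ext C D -> P C K -> P D K
  end.

Lemma item_of_ext_closed g : item_ext_closed (item_of g).
Proof. destruct g; cbn [item_of item_ext_closed]; intros; eapply supp_ext; eauto. Qed.

Lemma bangs_ok_ext {its C D} :
  Forall item_ext_closed its -> ext C D -> bangs_ok its C -> bangs_ok its D.
Proof.
  intros Hits E. induction Hits as [|[P|P] its HP _ IH]; simpl; auto.
  intros [HPC Hits]. split; eauto.
Qed.

Lemma plain_supp_ext {its C D K} :
  Forall item_ext_closed its -> ext C D -> plain_supp its C K -> plain_supp its D K.
Proof.
  intros Hits E. revert K.
  induction Hits as [|[P|P] its HP _ IH]; simpl; auto.
  intros K [K1 [K2 [HK [HP1 HK2]]]]. exists K1, K2. eauto.
Qed.

Lemma ante_elim {its C D M K} {G : base A -> list A -> Prop} :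
  Forall item_ext_closed its -> ext C D -> bangs_ok its C -> plain_supp its C K ->
  ante its D M G -> G D (M ++ K).
Proof.
  intros Hits E Hb Hp H. apply H.
  - apply ext_refl.
  - exact (bangs_ok_ext Hits E Hb).
  - exact (plain_supp_ext Hits E Hp).
Qed.

Lemma supp_lolli_elim {g h C D M K} :
  ext C D -> bangs_ok [item_of g] C -> plain_supp [item_of g] C K ->
  supp D M (Lolli g h) -> supp D (M ++ K) h.
Proof.
  intros E Hb Hp H. exact (ante_elim (G := fun D M => supp D M h)
    (Forall_cons _ (item_of_ext_closed g) (Forall_nil _)) E Hb Hp H).
Qed.

Lemma ante_frame {its B C K K'} {G G' : base A -> list A -> Prop} :
  (forall D M M', Permutation M M' -> G' D M -> G' D M') ->
  ext B C ->
  (forall D M, ext C D -> G D M -> G' D (M ++ K')) ->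
  ante its B K G -> ante its C (K ++ K') G'.
Proof.
  intros HG' E Hstep H D K'' ECD Hb Hp.
  apply HG' with ((K ++ K'') ++ K').
  - rewrite <- !app_assoc. apply Permutation_app_head, Permutation_app_comm.
  - apply Hstep; [exact ECD|]. exact (H D K'' (ext_trans E ECD) Hb Hp).
Qed.

Lemma plus_elim_deriv {phi psi chi B L K C K' p} :
  supp B L (Plus phi psi) ->
  ante_supp B K [phi] chi -> ante_supp B K [psi] chi ->
  ext B C ->
  (forall D M, ext C D -> supp D M chi -> deriv D (M ++ K') p) ->
  deriv C ((L ++ K) ++ K') p.
Proof.
  intros Hplus Hphi Hpsi E Hstep. rewrite <- app_assoc.
  apply Hplus; [exact E| |];
    eapply ante_frame; eauto; intros; eapply deriv_perm; eauto.
Qed.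

End PlusElimination.

Theorem lemma7 (A : Type) (B : base A) (L K : list A) (phi psi chi : formula A) :
  supp B L (Plus phi psi) ->
  ante_supp B K [phi] chi ->
  ante_supp B K [psi] chi ->
  supp B (L ++ K) chi.
Proof.
  revert B L K.
  induction chi as [a| | | |g ? h IHh|g ? h ?|g IHg h IHh|g ? h ?|g ?];
    intros B L K Hplus Hphi Hpsi; simpl.
  - exact (Hplus B K a (ext_refl B) Hphi Hpsi).
  - exact I.
  - intros p K'. apply (plus_elim_deriv Hplus Hphi Hpsi (ext_refl B)).
    intros D M _ HD. apply HD.
  - intros C K' p E d. apply (plus_elim_deriv Hplus Hphi Hpsi E).
    intros D M ECD HD. exact (HD D K' p (ext_refl D) (deriv_ext ECD d)).
  - intros C K' E Hb Hp. rewrite <- app_assoc.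
    apply (IHh C L (K ++ K') (supp_ext E Hplus));
      eapply ante_frame; eauto using supp_perm; intros D M ECD HD;
      exact (supp_lolli_elim ECD Hb Hp HD).
  - intros C K' p E Hgh. apply (plus_elim_deriv Hplus Hphi Hpsi E).
    intros D M ECD HD. exact (HD D K' p (ext_refl D) (ante_ext ECD Hgh)).
  - split; [apply IHg | apply IHh]; auto;
      eapply ante_impl; eauto; intros D M _ [Hg Hh]; assumption.
  - intros C K' p E Hg Hh. apply (plus_elim_deriv Hplus Hphi Hpsi E).
    intros D M ECD HD. exact (HD D K' p (ext_refl D) (ante_ext ECD Hg) (ante_ext ECD Hh)).
  - intros C K' p E Hg. apply (plus_elim_deriv Hplus Hphi Hpsi E).
    intros D M ECD HD. apply (HD D K' p (ext_refl D)).
    intros D' E' Hs. exact (Hg D' (ext_trans ECD E') Hs).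
Qed.
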